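(* Every realizable vector is 1-realizable.
   Context: All graphs are finite, nonempty, and reflexive (every vertex has a loop). $N[v]$ is the closed neighborhood of $v$ (including $v$). For distinct $v,w$, $w$ strictly corners $v$ if $N[v]\subsetneq N[w]$; $v$ is then a strict corner. A vertex dominates a set if adjacent to all its vertices. Corner ranking: set $G^{(1)}=G$, $k=1$. If $G^{(k)}$ is a clique, give all its vertices rank $k$ and stop. Else if $G^{(k)}$ has no strict corners, give all its vertices rank $\infty$ and stop. Else give every strict corner of $G^{(k)}$ rank $k$, delete them to get $G^{(k+1)}$ (induced subgraph), increase $k$ and repeat. The corner rank is the largest rank of a vertex; $X_k$ is the set of rank-$k$ vertices; cop-win graphs are exactly those of finite corner rank. A graph of finite corner rank $\alpha$ is of type 1 if some (equivalently every) vertex of rank $\alpha$ dominates $V(G^{(\alpha-1)})$, and of type 0 otherwise. A vector is a finite list of positive integers; the rank cardinality vector is $(x_\alpha,\dots,x_1)$ with $x_k=|X_k|$. A vector is realizable if it is the rank cardinality vector of some cop-win graph, and 1-realizable if it is the rank cardinality vector of some cop-win graph of type 1. *)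

From mathcomp Require Import all_boot.
Set Implicit Arguments. Unset Strict Implicit. Unset Printing Implicit Defensive.

Definition graph (T : finType) (e : rel T) : Prop :=
  [/\ 0 < #|T|, reflexive e & symmetric e].

Section CornerRanking.
Variables (T : finType) (e : rel T).

Definition nbhd (S : {set T}) (v : T) : {set T} := [set w in S | e v w].

Definition strict_corner (S : {set T}) (v : T) : bool :=
  (v \in S) && [exists w in S, (w != v) && (nbhd S v \proper nbhd S w)].

Definition corners (S : {set T}) : {set T} := [set v | strict_corner S v].

Definition is_clique (S : {set T}) : bool := [forall v in S, forall w in S, e v w].

Definition corner_step (S : {set T}) : {set T} := S :\: corners S.

(* vertex set of G^(k), k >= 1;  G^(1) = G.  (Convention: G^(0) = G.)
   Once the procedure stops (clique, or no strict corners), corner_step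
   is the identity, so the sequence becomes constant. *)
Definition Gk (k : nat) : {set T} := iter k.-1 corner_step setT.

Definition ranked_at (k : nat) (v : T) : bool :=
  (v \in Gk k) && (is_clique (Gk k) || strict_corner (Gk k) v).

Definition has_rank (v : T) (k : nat) : bool :=
  [&& 0 < k, ranked_at k v & [forall j : 'I_k, (0 < (j : nat)) ==> ~~ ranked_at j v]].

Definition Xk (k : nat) : {set T} := [set v | has_rank v k].

Definition cop_win : Prop := forall v, exists k, has_rank v k.

Definition corner_rank_is (a : nat) : Prop :=
  [/\ cop_win, exists v, has_rank v a & forall v k, has_rank v k -> k <= a].

Definition rank_card_vector (a : nat) : seq nat := [seq #|Xk k| | k <- rev (iota 1 a)].

Definition dominates (v : T) (S : {set T}) : bool := [forall w in S, e v w].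

Definition type1 (a : nat) : Prop := exists v, has_rank v a && dominates v (Gk a.-1).

End CornerRanking.

Definition realizable (s : seq nat) : Prop :=
  exists (T : finType) (e : rel T), graph e /\
    exists a, corner_rank_is e a /\ rank_card_vector e a = s.

Definition one_realizable (s : seq nat) : Prop :=
  exists (T : finType) (e : rel T), graph e /\
    exists a, [/\ corner_rank_is e a, type1 e a & rank_card_vector e a = s].

From mathcomp Require Import all_boot zify.
Set Implicit Arguments. Unset Strict Implicit. Unset Printing Implicit Defensive.

(* Let G be cop-win of corner rank a and not of type 1, and let H = G^(a-1),
   whose non-corners form the clique G^(a).  A vertex of G^(a) adjacent to all
   strict corners of H would dominate H, so there is none.  Every strict corner
   is adjacent to a non-corner dominating it, and adjacency to all corners of H
   passes to any dominating vertex; hence no vertex of H at all is adjacent to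
   all strict corners of H.  This forces x_a >= 2 and x_(a-1) >= 2, and also
   x_(a-2) >= 2 when a >= 3: a lone strict corner of G^(a-2) is adjacent to
   every strict corner of H, since a strict corner of H avoiding all strict
   corners of G^(a-2) would already be a strict corner of G^(a-2).
   Conversely, a vector of positive entries whose first three entries are at
   least 2 is realized with type 1 by blowing up a fixed skeleton graph: each
   vertex of the skeleton (a role) becomes a clique of twins, and the roles are
   chosen so that the strict corners at every stage are exactly the copies in
   the next layer. *)

Section CornerRanking.
Variables (T : finType) (e : rel T).
Implicit Types (S H : {set T}) (v w : T).

Lemma subset1_of_card_le1 (A B : {set T}) : A \subset B -> #|A| <= 1 -> B != set0 ->
  exists2 p, p \in B & A \subset [set p].
Proof.
move=> AB A1 /set0Pn[x xB]; case: (set_0Vmem A) => [->|[p pA]].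
  by exists x; rewrite ?sub0set.
exists p; first exact: subsetP AB p pA.
by apply/subsetP => c cA; rewrite inE (card_le1_eqP A1 c p).
Qed.

Lemma in_nbhd S v w : (w \in nbhd e S v) = (w \in S) && e v w.
Proof. by rewrite inE. Qed.

Lemma in_corner_step S v :
  (v \in corner_step e S) = (v \in S) && ~~ strict_corner e S v.
Proof. by rewrite !inE andbC. Qed.

Lemma corner_step_subset S : corner_step e S \subset S.
Proof. exact: subsetDl. Qed.

Lemma corners_subset S : corners e S \subset S.
Proof. by apply/subsetP => v; rewrite inE => /andP[]. Qed.

Lemma cliqueP S : reflect {in S &, forall v w, e v w} (is_clique e S).
Proof.
apply: (iffP forall_inP) => [cS v w vS wS | cS v vS].
  exact: forall_inP (cS v vS) w wS.
by apply/forall_inP => w; apply: cS.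
Qed.

Lemma clique_corners S : is_clique e S -> corners e S = set0.
Proof.
move/cliqueP => cS; apply/setP => v; rewrite !inE; apply/negP.
case/andP => vS /exists_inP[w _ /andP[_ /properP[_ [x]]]].
by rewrite !in_nbhd => /andP[xS _]; rewrite xS cS.
Qed.

Lemma GkS k : 0 < k -> Gk e k.+1 = corner_step e (Gk e k).
Proof. by case: k => // k _; rewrite /Gk /= iterS. Qed.

Lemma Gk_subset j k : j <= k -> Gk e k \subset Gk e j.
Proof.
move/subnKC <-; elim: (k - j) => [|i IH]; first by rewrite addn0.
rewrite addnS; apply: subset_trans IH; case: (j + i) => [|n]; first exact: subxx.
by rewrite GkS // corner_step_subset.
Qed.

Lemma exists_noncorner_dominator S v : v \in S ->
  exists2 w, w \in corner_step e S & nbhd e S v \subset nbhd e S w.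
Proof.
move=> vS; pose P w := (w \in S) && (nbhd e S v \subset nbhd e S w).
have Pv : P v by rewrite /P vS subxx.
case: (arg_maxnP (fun w => #|nbhd e S w|) Pv) => w /andP[wS vw] wmax.
exists w => //; rewrite in_corner_step wS /=.
apply/negP => /andP[_ /exists_inP[x xS /andP[_ wx]]].
have /wmax : P x by rewrite /P xS (subset_trans vw (proper_sub wx)).
by rewrite /geq /= leqNgt proper_card.
Qed.

Lemma corner_adj_prev_corner S c : c \in corners e (corner_step e S) ->
  exists2 p, p \in corners e S & e c p.
Proof.
set H := corner_step e S.
have [/exists_inP[p ? ?] _ | /exists_inPn nadj] :=
  boolP [exists p in corners e S, e c p]; first by exists p.
rewrite inE => /andP[cH /exists_inP[w wH /andP[wc cw]]].
move: cH; rewrite in_corner_step => /andP[cS /negP[]].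
have nbhd_c : nbhd e S c = nbhd e H c.
  apply/setP => y; rewrite !in_nbhd in_corner_step.
  case: (boolP (strict_corner e S y)) => [yS | _]; last by rewrite andbT.
  by rewrite (negbTE (nadj y _)) ?inE ?andbF.
rewrite /strict_corner cS; apply/exists_inP; exists w.
  exact: subsetP (corner_step_subset S) w wH.
rewrite wc nbhd_c /=; apply: (proper_sub_trans cw); apply/subsetP => y.
by rewrite !in_nbhd => /andP[/(subsetP (corner_step_subset S)) -> ->].
Qed.

Definition adj_corners S w : Prop := forall c, c \in corners e S -> e w c.

Lemma exists_noncorner_adj_corners S H p : p \in S -> corners e H \subset S ->
  adj_corners H p -> exists2 w, w \in corner_step e S & adj_corners H w.
Proof.
move=> pS cHS pH; have [w wS pw] := exists_noncorner_dominator pS.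
exists w => // c cH; have : c \in nbhd e S p by rewrite in_nbhd (subsetP cHS c cH) pH.
by move/(subsetP pw); rewrite in_nbhd => /andP[].
Qed.

Hypotheses (e_refl : reflexive e) (e_sym : symmetric e).

Lemma corner_adj_noncorner S c : c \in corners e S ->
  exists2 w, w \in corner_step e S & e w c.
Proof.
rewrite inE => /andP[cS _]; have [w wS cw] := exists_noncorner_dominator cS.
exists w => //; have : c \in nbhd e S c by rewrite in_nbhd cS e_refl.
by move/(subsetP cw); rewrite in_nbhd => /andP[].
Qed.

Section CornerRank.
Variable a : nat.
Hypothesis cr : corner_rank_is e a.

Lemma corner_rank_gt0 : 0 < a.
Proof. by case: cr => _ [v /and3P[]]. Qed.

Lemma Gk_neq0 j : j <= a -> Gk e j != set0.
Proof.
case: cr => _ [v /and3P[_ /andP[va _] _]] _ ja.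
by apply/set0Pn; exists v; apply: subsetP (Gk_subset ja) v va.
Qed.

Lemma Gk_not_clique j : 0 < j < a -> ~~ is_clique e (Gk e j).
Proof.
case/andP => j0 ja; case: cr => _ [v /and3P[_ /andP[va _] before]] _.
move/forallP/(_ (Ordinal ja)): before; rewrite /= j0 /ranked_at negb_and negb_or.
by case/orP=> [/negP[]|/andP[]//]; apply: subsetP (Gk_subset (ltnW ja)) v va.
Qed.

Lemma not_ranked_before j k v : 0 < j < k -> k <= a -> v \in Gk e k ->
  ~~ ranked_at e j v.
Proof.
case/andP=> j0 jk ka vk; have ja := leq_trans jk ka.
rewrite /ranked_at negb_and negb_or Gk_not_clique ?j0 //=.
have : v \in Gk e j.+1 := subsetP (Gk_subset jk) v vk.
by rewrite GkS // in_corner_step => /andP[_ ->]; rewrite orbT.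
Qed.

Lemma has_rank_ranked_at k v : 0 < k <= a -> has_rank e v k = ranked_at e k v.
Proof.
case/andP=> k0 ka; rewrite /has_rank k0 /=; case rk: (ranked_at e k v) => //=.
apply/forall_inP => j j0; apply: (not_ranked_before _ ka); first by rewrite j0 /=.
by case/andP: rk.
Qed.

Lemma Gk_clique : is_clique e (Gk e a).
Proof.
case: cr => rank_ex [v /and3P[_ /andP[va _] _]] rank_le.
have [w wa _] := exists_noncorner_dominator va.
rewrite -GkS ?corner_rank_gt0 // in wa.
have [k wk] := rank_ex w; have ka := rank_le _ _ wk.
case/and3P: wk => k0 /andP[_ /orP[ck | wc]] _.
  move: ka; rewrite leq_eqVlt => /predU1P[<- // | kla].
  by move: ck; rewrite (negbTE (Gk_not_clique _)) ?k0.
have : w \in Gk e k.+1 := subsetP (Gk_subset (ka : k.+1 <= a.+1)) w wa.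
by rewrite GkS // in_corner_step wc andbF.
Qed.

(* For a = 1 this relies on the convention G^(0) = G^(1). *)
Lemma Gk_top_step : Gk e a = corner_step e (Gk e a.-1).
Proof.
have := Gk_clique; have := corner_rank_gt0; rewrite leq_eqVlt.
case/predU1P=> [<- cl | a1 _]; first by rewrite /corner_step clique_corners ?setD0.
by rewrite -GkS ?prednK //; lia.
Qed.

Lemma Xk_top : Xk e a = Gk e a.
Proof.
apply/setP => v; rewrite inE has_rank_ranked_at ?corner_rank_gt0 ?leqnn //.
by rewrite /ranked_at Gk_clique orTb andbT.
Qed.

Lemma Xk_corners k : 0 < k < a -> Xk e k = corners e (Gk e k).
Proof.
move=> ka; apply/setP => v; rewrite !inE has_rank_ranked_at; last first.
  by case/andP: ka => -> /ltnW.
rewrite /ranked_at (negbTE (Gk_not_clique ka)) /=.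
by apply/andb_idl => /andP[].
Qed.

Hypothesis not_type1 : ~ type1 e a.

Lemma type1_of_adj_corners w : w \in Gk e a -> adj_corners (Gk e a.-1) w -> type1 e a.
Proof.
move=> wa wc; exists w; apply/andP; split; first by move: wa; rewrite -Xk_top inE.
apply/forall_inP => y yH; case: (boolP (y \in Gk e a)) => ya.
  exact: (cliqueP _ Gk_clique).
by apply: wc; move: ya; rewrite Gk_top_step in_corner_step yH inE negbK.
Qed.

Lemma not_adj_corners z : z \in Gk e a.-1 -> ~ adj_corners (Gk e a.-1) z.
Proof.
move=> zH zc; have [w wa wc] := exists_noncorner_adj_corners zH (corners_subset _) zc.
by apply: not_type1; apply: (type1_of_adj_corners _ wc); rewrite Gk_top_step.
Qed.

Lemma card_Gk_top : 1 < #|Gk e a|.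
Proof.
have /set0Pn[v va] := Gk_neq0 (leqnn a).
rewrite ltnNge; apply/negP => /card_le1_eqP top1.
apply: (not_adj_corners (subsetP (Gk_subset (leq_pred a)) v va)) => c.
by case/corner_adj_noncorner => w; rewrite -Gk_top_step => wa; rewrite (top1 v w).
Qed.

Lemma card_corners_pred : 1 < #|corners e (Gk e a.-1)|.
Proof.
rewrite ltnNge; apply/negP => c1.
have [p pH cp] := subset1_of_card_le1 (corners_subset _) c1 (Gk_neq0 (leq_pred a)).
by apply: (not_adj_corners pH) => c /(subsetP cp); rewrite inE => /eqP ->.
Qed.

Lemma card_corners_pred2 : 2 < a -> 1 < #|corners e (Gk e a.-2)|.
Proof.
move=> a3; rewrite ltnNge; apply/negP => c1.
have step : Gk e a.-1 = corner_step e (Gk e a.-2).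
  by rewrite -GkS; [congr (Gk e _) | ]; lia.
have a2a : a.-2 <= a by rewrite -subn2 leq_subr.
have [p pS cp] := subset1_of_card_le1 (corners_subset _) c1 (Gk_neq0 a2a).
have pH : adj_corners (Gk e a.-1) p.
  move=> c; rewrite step => /corner_adj_prev_corner[q /(subsetP cp)].
  by rewrite inE e_sym => /eqP ->.
have corners_sub : corners e (Gk e a.-1) \subset Gk e a.-2.
  by rewrite step; apply: subset_trans (corners_subset _) (corner_step_subset _).
have [z zH zc] := exists_noncorner_adj_corners pS corners_sub pH.
by rewrite -step in zH; apply: not_adj_corners zH zc.
Qed.

Lemma card_Xk_gt1 i : i < 3 -> i < a -> 1 < #|Xk e (a - i)|.
Proof.
case: i => [|[|[|//]]] _ ia; first by rewrite subn0 Xk_top card_Gk_top.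
  by rewrite subn1 Xk_corners ?card_corners_pred //; lia.
by rewrite subn2 Xk_corners ?card_corners_pred2 //; lia.
Qed.

End CornerRank.

Lemma size_rank_card_vector a : size (rank_card_vector e a) = a.
Proof. by rewrite size_map size_rev size_iota. Qed.

Lemma nth_rank_card_vector a i : i < a ->
  nth 0 (rank_card_vector e a) i = #|Xk e (a - i)|.
Proof.
move=> ia; rewrite (nth_map 0) ?size_rev ?size_iota // nth_rev ?size_iota //.
by rewrite nth_iota; [congr #|Xk e _| | ]; lia.
Qed.

Section Layering.
Variables (rk : T -> nat) (a : nat).
Hypotheses (rk_gt0 : forall v, 0 < rk v) (rk_le : forall v, rk v <= a)
  (rk_onto : forall k, 0 < k <= a -> exists v, rk v = k)
  (corners_level : forall k, 0 < k < a ->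
     corners e [set v | k <= rk v] = [set v | rk v == k])
  (clique_level : is_clique e [set v | a <= rk v]).

Lemma Gk_level k : 0 < k <= a -> Gk e k = [set v | k <= rk v].
Proof.
elim: k => [//|k IH] /andP[_ ka]; case: k IH ka => [_ _|k IH ka].
  by apply/setP => v; rewrite !inE rk_gt0.
rewrite GkS // IH; last exact: ltnW.
rewrite /corner_step corners_level ?ka //.
by apply/setP => v; rewrite !inE [RHS]ltn_neqAle eq_sym.
Qed.

Lemma ranked_at_level j v : 0 < j <= a -> ranked_at e j v = (j == rk v).
Proof.
move=> ja; rewrite /ranked_at Gk_level // inE.
case/andP: ja => j0; rewrite leq_eqVlt => /predU1P[-> | ja].
  by rewrite clique_level orTb andbT eqn_leq rk_le andbT.
have [u uj] : exists u, rk u = j by apply: rk_onto; rewrite j0 ltnW.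
have -> : is_clique e [set v | j <= rk v] = false.
  apply/negP => /clique_corners; rewrite corners_level ?j0 //.
  by move/setP/(_ u); rewrite !inE uj eqxx.
have /setP/(_ v) : corners e [set v | j <= rk v] = [set v | rk v == j].
  by apply: corners_level; rewrite j0 ja.
by rewrite !inE => ->; rewrite eq_sym; apply/andb_idl => /eqP ->.
Qed.

Lemma has_rank_level v k : has_rank e v k = (k == rk v).
Proof.
have rk_range : 0 < rk v <= a by rewrite rk_gt0 rk_le.
apply/idP/eqP => [/and3P[k0 vk /forall_inP before] | ->].
  have [vlt | kv] := ltnP (rk v) k.
    by move: (before (Ordinal vlt)); rewrite /= rk_gt0 ranked_at_level // eqxx => /(_ isT).
  by apply/eqP; rewrite -ranked_at_level // k0 (leq_trans kv (rk_le v)).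
rewrite /has_rank rk_gt0 ranked_at_level // eqxx /=.
apply/forall_inP => j j0; rewrite ranked_at_level ?j0 ?neq_ltn ?ltn_ord //=.
exact: leq_trans (ltnW (ltn_ord j)) (rk_le v).
Qed.

Lemma corner_rank_level : 0 < a -> corner_rank_is e a.
Proof.
move=> a0; split=> [v | | v k].
- by exists (rk v); rewrite has_rank_level.
- have [v va] : exists v, rk v = a by apply: rk_onto; rewrite a0 leqnn.
  by exists v; rewrite has_rank_level va.
- by rewrite has_rank_level => /eqP ->.
Qed.

End Layering.
End CornerRanking.

Definition dom_upto (E : rel nat) (M u w : nat) : bool :=
  all (fun r => E u r ==> E w r) (iota 0 M.+1).

Definition sdom_upto (E : rel nat) (M u w : nat) : bool :=
  dom_upto E M u w && ~~ dom_upto E M w u.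

Lemma dom_uptoP (E : rel nat) M u w :
  reflect (forall r, r <= M -> E u r -> E w r) (dom_upto E M u w).
Proof.
apply: (iffP allP) => [d r rM | d r]; last by rewrite mem_iota ltnS => /d/implyP.
by apply/implyP; apply: d; rewrite mem_iota ltnS.
Qed.

Lemma dom_upto_refl (E : rel nat) M u : dom_upto E M u u.
Proof. exact/dom_uptoP. Qed.

Lemma dom_upto_le (E : rel nat) N M u w : N <= M -> dom_upto E M u w -> dom_upto E N u w.
Proof. by move=> NM /dom_uptoP d; apply/dom_uptoP => r rN; apply: d (leq_trans rN NM). Qed.

Section Blowup.
Variables (T : finType) (E : rel nat) (role : T -> nat).

Definition blowup : rel T := fun p q => E (role p) (role q).

Variables (S : {set T}) (M : nat).
Hypotheses (in_S : forall p, (p \in S) = (role p <= M))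
  (role_onto : forall r, r <= M -> exists p, role p = r).

Lemma blowup_nbhd_subset p q :
  (nbhd blowup S p \subset nbhd blowup S q) = dom_upto E M (role p) (role q).
Proof.
apply/subsetP/dom_uptoP => [sub r rM Epr | d x].
  have [x xr] := role_onto rM; rewrite -xr in rM Epr *.
  have /sub : x \in nbhd blowup S p by rewrite in_nbhd in_S rM.
  by rewrite in_nbhd => /andP[].
by rewrite !in_nbhd => /andP[xS Epx]; rewrite xS /=; apply: (d _ _ Epx); rewrite -in_S.
Qed.

Lemma blowup_strict_corner p : strict_corner blowup S p =
  (role p <= M) && has (sdom_upto E M (role p)) (iota 0 M.+1).
Proof.
rewrite /strict_corner in_S; congr (_ && _).
apply/exists_inP/hasP => [[q qS /andP[_ pq]] | [w wM /andP[pw wp]]].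
  exists (role q); first by rewrite mem_iota ltnS -in_S.
  by move: pq; rewrite /proper !blowup_nbhd_subset.
have [q qw] : exists q, role q = w by apply: role_onto; move: wM; rewrite mem_iota ltnS.
exists q; first by rewrite in_S qw; move: wM; rewrite mem_iota ltnS.
rewrite /proper !blowup_nbhd_subset qw pw wp !andbT.
by apply: contraNneq wp => qp; rewrite -qw qp dom_upto_refl.
Qed.

End Blowup.

(* Layers 0, 1, 2 of the blow-up use the roles {0,1}, {2,3}, {4,5} and layer
   l >= 3 the single role l+3; from 6 on the roles form a path.  [top_role l]
   is the largest role of the layers 0..l. *)
Definition skel_edge (u v : nat) : bool :=
  [|| (u == 0) && (v == 1), (u < 2) && (2 <= v < 4), (2 <= u < 4) && (4 <= v < 6),
      (u == 0) && (v == 4), (u == 1) && (v == 5),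
      (3 <= u < 6) && (v == 6) | (6 <= u) && (v == u.+1)].

Definition skel : rel nat := fun u v => [|| u == v, skel_edge u v | skel_edge v u].

Definition top_role (l : nat) : nat := if l <= 2 then l.*2.+1 else l + 3.

Lemma skel_refl : reflexive skel.
Proof. by move=> u; rewrite /skel eqxx. Qed.

Lemma skel_sym : symmetric skel.
Proof. by move=> u v; rewrite /skel eq_sym [skel_edge u v || _]orbC. Qed.

Lemma skel_succ v : 6 <= v -> skel v v.+1.
Proof. by move=> v6; rewrite /skel /skel_edge v6 eqxx !orbT. Qed.

Lemma skel_pred v : 6 <= v -> skel v v.-1.
Proof.
rewrite leq_eqVlt => /predU1P[<- // | v7].
by rewrite skel_sym -[v in skel _ v](ltn_predK v7) skel_succ // -ltnS (ltn_predK v7).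
Qed.

Lemma skel_nbr_le v w : skel w v -> w <= maxn v.+1 7.
Proof. by rewrite /skel /skel_edge; lia. Qed.

Lemma skel_nbr_ge v w : 7 <= v -> skel w v -> v.-1 <= w.
Proof. by rewrite /skel /skel_edge; lia. Qed.

Lemma skel_dom_path M u w : 7 <= M -> u < M -> dom_upto skel M u w -> w = u.
Proof.
move=> M7 uM /[dup] d /dom_uptoP dP; have wu := dP u (ltnW uM) (skel_refl u).
have [u6 | u7] := leqP u 6.
  have w7 : w <= 7 by move: (skel_nbr_le wu); rewrite (maxn_idPr (u6 : u.+1 <= 7)).
  have /allP/(_ u) : all (fun u => all (fun w => dom_upto skel 7 u w ==> (w == u))
      (iota 0 8)) (iota 0 7) by vm_compute.
  rewrite mem_iota ltnS u6 => /(_ isT) /allP /(_ w); rewrite mem_iota ltnS w7.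
  by move=> /(_ isT) /implyP /(_ (dom_upto_le M7 d)) /eqP.
have wu1 := dP u.+1 uM (skel_succ (ltnW u7)).
have wu0 := dP u.-1 (leq_trans (leq_pred u) (ltnW uM)) (skel_pred (ltnW u7)).
have := skel_nbr_le wu0; have := skel_nbr_ge _ wu1; rewrite (ltn_predK u7); lia.
Qed.

(* Boolean so that the first three layers can be checked by computation. *)
Definition layer_ok (M m : nat) : bool :=
  all (fun u => has (sdom_upto skel M u) (iota 0 M.+1)) (iota m.+1 (M - m)) &&
  all (fun u => ~~ has (sdom_upto skel M u) (iota 0 M.+1)) (iota 0 m.+1).

Lemma layer_ok_path M : 7 <= M -> layer_ok M M.-1.
Proof.
move=> M7; have M0 : 0 < M by apply: leq_trans M7.
apply/andP; split.
  apply/allP => u; rewrite mem_iota prednK // => /andP[Mu uM].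
  have -> : u = M by lia.
  apply/hasP; exists M.-1.
    by rewrite mem_iota ltnS leq_pred.
  apply/andP; split.
    apply/dom_uptoP => r rM; rewrite skel_sym => /(skel_nbr_ge M7) Mr.
    have [-> | ->] : r = M.-1 \/ r = M by lia.
      exact: skel_refl.
    by rewrite -{2}(prednK M0) skel_succ // -ltnS prednK.
  apply/dom_uptoP => /(_ M.-2 (leq_trans (leq_pred _) (leq_pred _))).
  rewrite skel_pred; last by rewrite -ltnS prednK.
  by rewrite skel_sym => /(_ isT) /(skel_nbr_ge M7); lia.
apply/allP => u; rewrite mem_iota => /andP[_ uM]; have {}uM : u < M by lia.
by apply/hasP => -[w _ /andP[/(skel_dom_path M7 uM) ->]]; rewrite dom_upto_refl.
Qed.

Lemma skel_layer l : 0 < l -> layer_ok (top_role l) (top_role l.-1).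
Proof.
case: l => [//|[|[|[|l]]]] _; try by vm_compute.
by apply: (layer_ok_path (M := l.+4 + 3)); rewrite addn3.
Qed.

Lemma skel_layer_corner l u : 0 < l -> top_role l.-1 < u <= top_role l ->
  has (sdom_upto skel (top_role l) u) (iota 0 (top_role l).+1).
Proof.
move=> l0 ul; case/andP: (skel_layer l0) => /allP /(_ u) + _; apply.
by rewrite mem_iota; lia.
Qed.

Lemma skel_layer_stable l u : 0 < l -> u <= top_role l.-1 ->
  ~~ has (sdom_upto skel (top_role l) u) (iota 0 (top_role l).+1).
Proof.
move=> l0 ul; case/andP: (skel_layer l0) => _ /allP; apply.
by rewrite mem_iota ltnS.
Qed.

Section Realizer.
Variable s : seq nat.
Hypotheses (s_gt0 : all (fun x => 0 < x) s)
  (s_top : forall i, i < 3 -> i < size s -> 1 < nth 0 s i).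

Definition vertex := {l : 'I_(size s) & 'I_(nth 0 s l)}.

Definition layer (p : vertex) : nat := tag p.

Definition role (p : vertex) : nat :=
  if layer p <= 2 then (layer p).*2 + (0 < tagged p) else layer p + 3.

Definition realizer : rel vertex := blowup skel role.

Lemma layer_lt p : layer p < size s.
Proof. exact: ltn_ord. Qed.

Lemma nth_s_gt0 i : i < size s -> 0 < nth 0 s i.
Proof. exact: (all_nthP 0 s_gt0). Qed.

Lemma exists_vertex l c : l < size s -> c < nth 0 s l ->
  exists p, layer p = l /\ tagged p = c :> nat.
Proof.
move=> ls cs; pose c' : 'I_(nth 0 s (Ordinal ls)) := Ordinal cs.
by exists (Tagged (fun l : 'I_(size s) => 'I_(nth 0 s l)) c').
Qed.

Lemma role_le p l : (layer p <= l) = (role p <= top_role l).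
Proof. by rewrite /role /top_role; case: (0 < tagged p); do 2 case: ifP; lia. Qed.

Lemma role_onto l r : l < size s -> r <= top_role l -> exists p, role p = r.
Proof.
rewrite /top_role => ls rl; have [r6 | r6] := ltnP r 6.
  have Ls : r./2 < size s by move: rl; case: ifP; lia.
  have cs : odd r < nth 0 s r./2.
    by case: (odd r); [apply: s_top; lia | apply: nth_s_gt0].
  have [p [pl pc]] := exists_vertex Ls cs; exists p.
  rewrite /role pl pc ifT; last lia.
  by rewrite -[RHS]odd_double_half addnC; case: (odd r).
have Ls : r - 3 < size s by move: rl; case: ifP; lia.
have [p [pl _]] := exists_vertex Ls (nth_s_gt0 Ls); exists p.
by rewrite /role pl ifF ?subnK //; lia.
Qed.

Lemma strict_corner_layers l p : 0 < l < size s ->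
  strict_corner realizer [set q | layer q <= l] p = (layer p == l).
Proof.
case/andP=> l0 ls.
rewrite (@blowup_strict_corner _ skel role _ (top_role l)); first last.
- by move=> r; apply: role_onto.
- by move=> q; rewrite inE role_le.
rewrite -role_le; case: (ltngtP (layer p) l) => pl //=.
  by apply/negbTE/skel_layer_stable; rewrite // -role_le -ltnS prednK.
apply: skel_layer_corner => //; rewrite ltnNge -!role_le pl; lia.
Qed.

Definition vertex_rank (p : vertex) : nat := size s - layer p.

Lemma vertex_rank_gt0 p : 0 < vertex_rank p.
Proof. by rewrite /vertex_rank subn_gt0 layer_lt. Qed.

Lemma vertex_rank_le p : vertex_rank p <= size s.
Proof. exact: leq_subr. Qed.

Lemma vertex_rank_onto k : 0 < k <= size s -> exists p, vertex_rank p = k.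
Proof.
case/andP=> k0 ks; have ls : size s - k < size s by rewrite ltn_subrL k0 (leq_trans k0 ks).
by have [p [pl _]] := exists_vertex ls (nth_s_gt0 ls); exists p; rewrite /vertex_rank pl subKn.
Qed.

Lemma level_layers k : k <= size s ->
  [set p | k <= vertex_rank p] = [set p | layer p <= size s - k].
Proof. by move=> ks; apply/setP => p; rewrite !inE /vertex_rank; apply/idP/idP; have := layer_lt p; lia. Qed.

Lemma corners_levels k : 0 < k < size s ->
  corners realizer [set p | k <= vertex_rank p] = [set p | vertex_rank p == k].
Proof.
case/andP=> k0 ks; rewrite level_layers; last exact: ltnW.
apply/setP => p.
rewrite !inE strict_corner_layers; last lia.
by apply/eqP/eqP; rewrite /vertex_rank; have := layer_lt p; lia.
Qed.

Lemma clique_levels : is_clique realizer [set p | size s <= vertex_rank p].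
Proof.
rewrite level_layers // subnn.
apply/cliqueP => p q; rewrite !inE !role_le /realizer /blowup /top_role /=.
by case: (role p) => [|[|]] //; case: (role q) => [|[|]].
Qed.

Lemma has_rank_realizer p k : has_rank realizer p k = (k == vertex_rank p).
Proof.
exact: (has_rank_level (e := realizer) vertex_rank_gt0 vertex_rank_le vertex_rank_onto
  corners_levels clique_levels).
Qed.

Lemma card_layer i : i < size s -> #|[set p : vertex | layer p == i]| = nth 0 s i.
Proof.
move=> i_lt; pose T_ (l : 'I_(size s)) := 'I_(nth 0 s l).
have -> : [set p : vertex | layer p == i] = [set Tagged T_ c | c : T_ (Ordinal i_lt)].
  apply/setP => -[l c]; rewrite !inE /layer /=; apply/eqP/imsetP => [li | [c' _]].
    have el : l = Ordinal i_lt by apply: val_inj.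
    by subst l; exists c.
  by move/(congr1 (@tag _ _)) => /= ->.
by rewrite card_imset ?card_ord // => x y; apply: eq_from_Tagged.
Qed.

Lemma rank_card_vector_realizer : rank_card_vector realizer (size s) = s.
Proof.
apply: (@eq_from_nth _ 0); rewrite size_rank_card_vector // => i i_lt.
rewrite nth_rank_card_vector // -card_layer //; apply: eq_card => p.
by rewrite !inE has_rank_realizer /vertex_rank; apply/eqP/eqP; have := layer_lt p; lia.
Qed.

Lemma one_realizable_top_gt1 : 0 < size s -> one_realizable s.
Proof.
move=> s0; have [v [v0 vc]] := exists_vertex s0 (nth_s_gt0 s0).
have v_role : role v = 0 by rewrite /role v0 vc.
exists vertex, realizer; split.
  by split; [apply/card_gt0P; exists v | move=> p; apply: skel_refl | move=> p q; apply: skel_sym].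
exists (size s); split; last exact: rank_card_vector_realizer.
  exact: (corner_rank_level (e := realizer) vertex_rank_gt0 vertex_rank_le vertex_rank_onto
    corners_levels clique_levels s0).
exists v; rewrite has_rank_realizer /vertex_rank v0 subn0 eqxx /=.
apply/forall_inP => w wG; rewrite /realizer /blowup v_role.
have : layer w <= 1.
  case: (ltnP 1 (size s)) => [s1 | s1]; last by have := layer_lt w; lia.
  move: wG; rewrite (Gk_level vertex_rank_gt0 corners_levels) ?inE /vertex_rank; lia.
by rewrite role_le /top_role /=; case: (role w) => [|[|[|[|]]]].
Qed.

End Realizer.

Theorem lemma3p21 (s : seq nat) :
  all (fun x => 0 < x) s -> realizable s -> one_realizable s.
Proof.
move=> s_gt0 [T [e [G [a [cr rcv]]]]]; subst s.
have [/existsP[v tv] | /existsPn nt] :=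
  boolP [exists v, has_rank e v a && dominates e v (Gk e a.-1)].
  by exists T, e; split=> //; exists a; split=> //; exists v.
have not_type1 : ~ type1 e a by case=> v; apply/negP.
case: G => _ e_refl e_sym.
apply: (one_realizable_top_gt1 s_gt0); rewrite ?size_rank_card_vector ?(corner_rank_gt0 cr) //.
by move=> i i3 ia; rewrite nth_rank_card_vector // card_Xk_gt1.
Qed.
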